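(* Fix $\alpha\in[0,1)$, $\beta\in(0,1)$, $Q=1-\alpha$, $S=1-\beta$. Let $\nu_n^{\alpha,\beta}$ be the stationary law of the combined count chain and, for $0\le k\le n$, $w_{n,k}^{\alpha,\beta}:=\frac{(n)_k}{n^k}Q^kS^{k(k+1)/2}$ (with $(n)_k=n(n-1)\cdots(n-k+1)$, $w_{n,0}^{\alpha,\beta}=1$). There are constants $0<c<C<\infty$ and an integer $M<\infty$, depending only on $\alpha,\beta$, such that for all sufficiently large $n$ and all $M\le k\le n$, $cw_{n,k}^{\alpha,\beta}\le\nu_n^{\alpha,\beta}(k)\le Cw_{n,k}^{\alpha,\beta}$. Moreover $\nu_n^{\alpha,\beta}(n)\sim\frac{1}{(S;S)_\infty}\frac{n!}{n^n}Q^nS^{n(n+1)/2}$.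
   Context: The combined count chain $(K_t)$ on $\{0,\dots,n\}$: given $K_t=k$, with probability $k/n$, $K_{t+1}\sim\mathrm{Bin}(k-1,S)+\mathrm{Bernoulli}(QS)$, and with probability $(n-k)/n$, $K_{t+1}\sim\mathrm{Bin}(k,S)+\mathrm{Bernoulli}(QS)$ (independent summands; the first case is omitted when $k=0$). It is irreducible and aperiodic with unique stationary law $\nu_n^{\alpha,\beta}$. (It counts present types in the collector where each round a uniform type is refreshed to present w.p. $Q$, absent w.p. $\alpha$, then every present coupon is independently retained w.p. $S$.) $(S;S)_\infty:=\prod_{r\ge1}(1-S^r)$. *)

From Stdlib Require Import Reals Lra Lia Factorial.
From Coquelicot Require Import Coquelicot.
Open Scope R_scope.

Definition bin_pmf (m : nat) (p : R) (i : nat) : R :=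
  if (i <=? m)%nat then Binomial.C m i * p ^ i * (1 - p) ^ (m - i) else 0.

(* P(Bin(m,S) + Bernoulli(QS) = j), summands independent. *)
Definition binber_pmf (m : nat) (S Q : R) (j : nat) : R :=
  match j with
  | O => bin_pmf m S 0 * (1 - Q * S)
  | Datatypes.S j' => bin_pmf m S j * (1 - Q * S) + bin_pmf m S j' * (Q * S)
  end.

(* Transition probability k -> j of the combined count chain on {0,...,n},
   with Q = 1 - alpha, S = 1 - beta.  When k = 0 the first case has
   weight k/n = 0, i.e. it is omitted. *)
Definition trans (n : nat) (alpha beta : R) (k j : nat) : R :=
  let Q := 1 - alpha in let S := 1 - beta in
  INR k / INR n * binber_pmf (k - 1) S Q j
  + INR (n - k) / INR n * binber_pmf k S Q j.

Definition stationary (n : nat) (alpha beta : R) (pi : nat -> R) : Prop :=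
  (forall k, (k <= n)%nat -> 0 <= pi k) /\
  sum_f_R0 pi n = 1 /\
  (forall j, (j <= n)%nat ->
     sum_f_R0 (fun k => pi k * trans n alpha beta k j) n = pi j).

Fixpoint falling (n k : nat) : R :=
  match k with
  | O => 1
  | Datatypes.S k' => falling n k' * INR (n - k')
  end.

Definition wgt (n : nat) (alpha beta : R) (k : nat) : R :=
  falling n k / INR n ^ k * (1 - alpha) ^ k * (1 - beta) ^ (k * (k + 1) / 2).

Fixpoint qpoch_partial (S : R) (m : nat) : R :=
  match m with
  | O => 1
  | Datatypes.S m' => qpoch_partial S m' * (1 - S ^ m)
  end.

Definition qpoch_inf (S : R) : R := Lim_seq (qpoch_partial S).

(* The factorial moments F_j = sum_m nu(m) (m)_j of the stationary law can be computed
   exactly: binomial thinning multiplies E[(K)_j] by S^j, so stationarity gives the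
   first-order recursion F_(j+1) (n - S^(j+1) (n-j-1)) = S^(j+1) Q (j+1) (n-j) F_j, whose
   solution is F_j prod_(i<=j) (1 - S^i (n-i)/n) = j! w_(n,j).  The product lies between
   (S;S)_oo and 1 and, at j = n, tends to (S;S)_oo; since F_n = n! nu(n), this is the
   asymptotics of nu(n).  For the two-sided bound, k! nu(k) <= F_k, while the Bonferroni
   inequality k! nu(k) >= F_k - F_(k+1) and F_(k+1) <= (k+1) S^(k+1) F_k / beta <= F_k / 2
   for k >= M give k! nu(k) >= F_k / 2. *)

From Stdlib Require Import Reals Lra Lia Factorial.
From Coquelicot Require Import Coquelicot.
Open Scope R_scope.

Lemma falling_gt m j : (m < j)%nat -> falling m j = 0.
Proof.
  induction 1 as [|j _ IH]; simpl.
  - rewrite Nat.sub_diag. simpl. ring.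
  - rewrite IH. ring.
Qed.

Lemma falling_S_r m j : falling m (S j) = falling m j * (INR m - INR j).
Proof.
  destruct (Nat.le_gt_cases j m) as [Hjm | Hmj].
  - simpl. rewrite minus_INR by exact Hjm. reflexivity.
  - rewrite !falling_gt by lia. ring.
Qed.

Lemma falling_S_S m j : falling (S m) (S j) = INR (S m) * falling m j.
Proof.
  induction j as [|j IH].
  - simpl. ring.
  - rewrite falling_S_r, IH, (falling_S_r m j), !S_INR. ring.
Qed.

Lemma falling_pascal m j :
  falling (S m) (S j) = falling m (S j) + INR (S j) * falling m j.
Proof. rewrite falling_S_S, falling_S_r, !S_INR. ring. Qed.

Lemma falling_diag n : falling n n = INR (fact n).
Proof.
  induction n as [|n IH]; [reflexivity|].
  rewrite falling_S_S, IH, fact_simpl, mult_INR. reflexivity.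
Qed.

Lemma falling_nonneg m j : 0 <= falling m j.
Proof.
  induction j as [|j IH]; simpl; [lra|].
  apply Rmult_le_pos; [exact IH | apply pos_INR].
Qed.

(* Removing one of [n] equally likely items, which is among the first [k] with
   probability [k/n], scales the [j]-th factorial moment by [(n-j)/n]. *)
Lemma falling_remove_uniform n k j : (k <= n)%nat ->
  INR k * falling (k - 1) j + INR (n - k) * falling k j
  = (INR n - INR j) * falling k j.
Proof.
  intros Hkn. destruct k as [|k].
  - rewrite Nat.sub_0_r. destruct j as [|j]; simpl; ring.
  - replace (S k - 1)%nat with k by lia.
    rewrite <- falling_S_S, falling_S_r, minus_INR by exact Hkn. ring.
Qed.

Lemma sum_f_R0_swap (f : nat -> nat -> R) n m :
  sum_f_R0 (fun i => sum_f_R0 (fun j => f i j) m) n =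
  sum_f_R0 (fun j => sum_f_R0 (fun i => f i j) n) m.
Proof.
  induction n as [|n IH]; simpl; [reflexivity|].
  rewrite IH, <- sum_plus. reflexivity.
Qed.

Lemma sum_f_R0_extract f n k : (k <= n)%nat ->
  sum_f_R0 f n = f k + sum_f_R0 (fun i => if Nat.eqb i k then 0 else f i) n.
Proof.
  intros Hkn. induction n as [|n IH].
  - replace k with 0%nat by lia. simpl. ring.
  - rewrite !tech5. destruct (Nat.eq_dec k (S n)) as [-> | Hne].
    + assert (Hrest : sum_f_R0 (fun i => if Nat.eqb i (S n) then 0 else f i) n = sum_f_R0 f n).
      { apply sum_eq. intros i Hi. destruct (Nat.eqb_spec i (S n)); [lia | reflexivity]. }
      rewrite Hrest, Nat.eqb_refl. ring.
    + rewrite IH by lia. destruct (Nat.eqb_spec (S n) k); [lia | ring].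
Qed.

Lemma sum_f_R0_nonneg f n : (forall i, (i <= n)%nat -> 0 <= f i) -> 0 <= sum_f_R0 f n.
Proof.
  intros Hf. rewrite <- (sum_eq_R0 (fun _ => 0) n) by reflexivity.
  apply sum_Rle. exact Hf.
Qed.

Lemma sum_f_R0_nonpos f n : (forall i, (i <= n)%nat -> f i <= 0) -> sum_f_R0 f n <= 0.
Proof.
  intros Hf. rewrite <- (sum_eq_R0 (fun _ => 0) n) by reflexivity.
  apply sum_Rle. exact Hf.
Qed.

(* [h] is the law of [X + Y] for [X ~ f] and an independent [Y ~ Bernoulli b]. *)
Lemma sum_f_R0_bernoulli_shift (f h g : nat -> R) (b : R) N :
  h 0%nat = (1 - b) * f 0%nat -> (forall i, h (S i) = (1 - b) * f (S i) + b * f i) ->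
  sum_f_R0 (fun i => h i * g i) (S N) =
  (1 - b) * sum_f_R0 (fun i => f i * g i) (S N) + b * sum_f_R0 (fun i => f i * g (S i)) N.
Proof.
  intros H0 HS.
  rewrite (decomp_sum (fun i => h i * g i)), (decomp_sum (fun i => f i * g i)) by lia.
  simpl pred. rewrite H0.
  rewrite (sum_eq _ (fun i => f (S i) * g (S i) * (1 - b) + f i * g (S i) * b))
    by (intros i _; rewrite HS; ring).
  rewrite sum_plus, <- !scal_sum. ring.
Qed.

Lemma sum_falling_pascal (f : nat -> R) N j :
  sum_f_R0 (fun i => f i * falling (S i) (S j)) N =
  sum_f_R0 (fun i => f i * falling i (S j)) N
  + INR (S j) * sum_f_R0 (fun i => f i * falling i j) N.
Proof.
  rewrite scal_sum, <- sum_plus. apply sum_eq. intros i _.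
  rewrite falling_pascal. ring.
Qed.

Lemma bin_pmf_S_0 m s : bin_pmf (S m) s 0 = (1 - s) * bin_pmf m s 0.
Proof. unfold bin_pmf. simpl Nat.leb. rewrite !C_n_0, !Nat.sub_0_r. simpl. ring. Qed.

Lemma bin_pmf_S_S m s i :
  bin_pmf (S m) s (S i) = (1 - s) * bin_pmf m s (S i) + s * bin_pmf m s i.
Proof.
  unfold bin_pmf.
  destruct (Nat.leb_spec (S i) (S m)), (Nat.leb_spec (S i) m), (Nat.leb_spec i m);
    try lia; try ring.
  - rewrite <- pascal by lia.
    replace (S m - S i)%nat with (S (m - S i)) by lia.
    replace (m - i)%nat with (S (m - S i)) by lia.
    simpl. ring.
  - replace i with m by lia. rewrite !C_n_n, !Nat.sub_diag. simpl. ring.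
Qed.

Lemma bin_pmf_falling_moment s m : forall N j, (m <= N)%nat ->
  sum_f_R0 (fun i => bin_pmf m s i * falling i j) N = falling m j * s ^ j.
Proof.
  induction m as [|m IH]; intros N j HmN.
  - assert (Hpmf : bin_pmf 0 s 0 = 1) by (unfold bin_pmf; simpl; rewrite C_n_0; ring).
    destruct N as [|N].
    + simpl. rewrite Hpmf. destruct j; simpl; ring.
    + rewrite decomp_sum, sum_eq_R0 by (try lia; intros i _; unfold bin_pmf; simpl; ring).
      rewrite Hpmf. destruct j; simpl; ring.
  - destruct N as [|N]; [lia|].
    rewrite (sum_f_R0_bernoulli_shift (bin_pmf m s) _ _ s)
      by (apply bin_pmf_S_0 || apply bin_pmf_S_S).
    rewrite IH by lia. destruct j as [|j].
    + change (fun i => bin_pmf m s i * falling (S i) 0)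
        with (fun i => bin_pmf m s i * falling i 0).
      rewrite IH by lia. simpl. ring.
    + rewrite sum_falling_pascal, !IH by lia. rewrite falling_pascal. simpl. ring.
Qed.

Lemma binber_pmf_falling_moment m s q N j : (S m <= N)%nat ->
  sum_f_R0 (fun i => binber_pmf m s q i * falling i (S j)) N =
  s ^ S j * (falling m (S j) + q * INR (S j) * falling m j).
Proof.
  intros HmN. destruct N as [|N]; [lia|].
  rewrite (sum_f_R0_bernoulli_shift (bin_pmf m s) _ _ (q * s))
    by (intros; simpl binber_pmf; ring).
  rewrite sum_falling_pascal, !bin_pmf_falling_moment by lia. simpl. ring.
Qed.

Lemma trans_falling_moment n alpha beta k j : (1 <= n)%nat -> (k <= n)%nat ->
  sum_f_R0 (fun i => trans n alpha beta k i * falling i (S j)) n =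
  (1 - beta) ^ S j * ((INR n - INR (S j)) * falling k (S j)
     + (1 - alpha) * INR (S j) * ((INR n - INR j) * falling k j)) / INR n.
Proof.
  intros Hn Hkn. assert (Hn0 : INR n <> 0) by (apply not_0_INR; lia).
  unfold trans. set (s := 1 - beta). set (q := 1 - alpha).
  rewrite (sum_eq _ (fun i => binber_pmf (k - 1) s q i * falling i (S j) * (INR k / INR n)
      + binber_pmf k s q i * falling i (S j) * (INR (n - k) / INR n)))
    by (intros; ring).
  rewrite sum_plus, <- !scal_sum.
  assert (Hdrop :
      INR k / INR n * sum_f_R0 (fun i => binber_pmf (k - 1) s q i * falling i (S j)) n
      = INR k / INR n * (s ^ S j * (falling (k - 1) (S j) + q * INR (S j) * falling (k - 1) j))).
  { destruct k as [|k]; [simpl; unfold Rdiv; ring|].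
    rewrite binber_pmf_falling_moment by lia. reflexivity. }
  assert (Hkeep :
      INR (n - k) / INR n * sum_f_R0 (fun i => binber_pmf k s q i * falling i (S j)) n
      = INR (n - k) / INR n * (s ^ S j * (falling k (S j) + q * INR (S j) * falling k j))).
  { destruct (Nat.eq_dec k n) as [-> | Hne]; [rewrite Nat.sub_diag; simpl; unfold Rdiv; ring|].
    rewrite binber_pmf_falling_moment by lia. reflexivity. }
  rewrite Hdrop, Hkeep, <- !falling_remove_uniform by exact Hkn.
  field. exact Hn0.
Qed.

Definition fmoment (n : nat) (nu : nat -> R) (j : nat) : R :=
  sum_f_R0 (fun m => nu m * falling m j) n.

Lemma fmoment_nonneg n nu j : (forall m, (m <= n)%nat -> 0 <= nu m) -> 0 <= fmoment n nu j.
Proof.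
  intros Hnu. apply sum_f_R0_nonneg. intros m Hm.
  apply Rmult_le_pos; [exact (Hnu m Hm) | apply falling_nonneg].
Qed.

Lemma fmoment_diag n nu : fmoment n nu n = INR (fact n) * nu n.
Proof.
  unfold fmoment. destruct n as [|n]; [simpl; ring|].
  rewrite tech5, falling_diag, sum_eq_R0; [ring|].
  intros m Hm. rewrite falling_gt by lia. ring.
Qed.

Lemma fact_mul_le_fmoment n nu k : (forall m, (m <= n)%nat -> 0 <= nu m) -> (k <= n)%nat ->
  INR (fact k) * nu k <= fmoment n nu k.
Proof.
  intros Hnu Hkn. unfold fmoment. rewrite (sum_f_R0_extract _ n k Hkn), falling_diag.
  assert (0 <= sum_f_R0 (fun i => if Nat.eqb i k then 0 else nu i * falling i k) n).
  { apply sum_f_R0_nonneg. intros i Hi. destruct (Nat.eqb i k); [lra|].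
    apply Rmult_le_pos; [exact (Hnu i Hi) | apply falling_nonneg]. }
  lra.
Qed.

(* Bonferroni: [nu m ((m)_k - (m)_(k+1)) = nu m (m)_k (1 + k - m)] is [<= 0] for [m <> k]. *)
Lemma fmoment_bonferroni n nu k : (forall m, (m <= n)%nat -> 0 <= nu m) -> (k <= n)%nat ->
  fmoment n nu k - fmoment n nu (S k) <= INR (fact k) * nu k.
Proof.
  intros Hnu Hkn. unfold fmoment. rewrite <- minus_sum.
  rewrite (sum_f_R0_extract _ n k Hkn), falling_S_r, falling_diag, Rminus_diag, Rmult_0_r.
  assert (sum_f_R0 (fun i => if Nat.eqb i k then 0
            else nu i * falling i k - nu i * falling i (S k)) n <= 0).
  { apply sum_f_R0_nonpos. intros i Hi. destruct (Nat.eqb_spec i k); [lra|].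
    rewrite falling_S_r.
    destruct (Nat.lt_ge_cases i k) as [Hik | Hki]; [rewrite falling_gt by exact Hik; lra|].
    assert (INR k + 1 <= INR i) by (rewrite <- S_INR; apply le_INR; lia).
    pose proof (Hnu i Hi). pose proof (falling_nonneg i k).
    assert (0 <= nu i * falling i k) by (apply Rmult_le_pos; assumption).
    nra. }
  lra.
Qed.

Lemma Rle_pow_le_1 s m k : 0 <= s <= 1 -> (m <= k)%nat -> s ^ k <= s ^ m.
Proof.
  intros Hs Hmk. replace k with (m + (k - m))%nat by lia. rewrite pow_add.
  assert (s ^ (k - m) <= 1) by (rewrite <- (pow1 (k - m)); apply pow_incr; lra).
  pose proof (pow_le s m (proj1 Hs)). nra.
Qed.

Lemma pow_S_bounds s j : 0 < s < 1 -> 0 < s ^ S j <= s.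
Proof.
  intros Hs. split; [apply pow_lt; lra|].
  rewrite <- (pow_1 s) at 2. apply Rle_pow_le_1; lra || lia.
Qed.

Lemma qpoch_partial_pos s m : 0 < s < 1 -> 0 < qpoch_partial s m.
Proof.
  intros Hs. induction m as [|m IH]; simpl qpoch_partial; [lra|].
  pose proof (pow_S_bounds s m Hs). simpl in *. nra.
Qed.

Lemma qpoch_partial_S_le s m : 0 < s < 1 -> qpoch_partial s (S m) <= qpoch_partial s m.
Proof.
  intros Hs. cbn [qpoch_partial].
  pose proof (pow_S_bounds s m Hs). pose proof (qpoch_partial_pos s m Hs). nra.
Qed.

Lemma qpoch_partial_antimono s m k : 0 < s < 1 -> (m <= k)%nat ->
  qpoch_partial s k <= qpoch_partial s m.
Proof.
  intros Hs. induction 1 as [|k _ IH]; [lra|].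
  pose proof (qpoch_partial_S_le s k Hs). lra.
Qed.

(* Once [s ^ (i0 + 1) <= (1 - s) / 2], the tail factors lose at most half:
   [prod (1 - x_i) >= 1 - sum x_i] and the geometric tail sum is at most [1/2]. *)
Lemma qpoch_partial_lower_bound s : 0 < s < 1 ->
  exists L, 0 < L /\ forall m, L <= qpoch_partial s m.
Proof.
  intros Hs.
  destruct (pow_lt_1_zero s ltac:(rewrite Rabs_pos_eq; lra) ((1 - s) / 2) ltac:(lra))
    as [i0 Hi0].
  specialize (Hi0 (S i0) ltac:(lia)). rewrite Rabs_pos_eq in Hi0 by (apply pow_le; lra).
  pose proof (qpoch_partial_pos s i0 Hs) as HP0. set (P0 := qpoch_partial s i0) in *.
  assert (Htail : forall m, (i0 <= m)%nat ->
            P0 * (1 - (s ^ S i0 - s ^ S m) / (1 - s)) <= qpoch_partial s m).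
  { induction 1 as [|m Hm IH].
    - rewrite Rminus_diag. unfold Rdiv, P0. lra.
    - cbn [qpoch_partial]. replace (s ^ S (S m)) with (s * s ^ S m) by reflexivity.
      pose proof (pow_S_bounds s m Hs).
      assert (s ^ S m <= s ^ S i0) by (apply Rle_pow_le_1; lra || lia).
      set (a := s ^ S m) in *. set (A := (s ^ S i0 - a) / (1 - s)) in *.
      assert (0 <= A) by (apply Rdiv_le_0_compat; lra).
      replace ((s ^ S i0 - s * a) / (1 - s)) with (A + a) by (unfold A; field; lra).
      assert (P0 * (1 - A) * (1 - a) <= qpoch_partial s m * (1 - a))
        by (apply Rmult_le_compat_r; lra).
      assert (0 <= P0 * A * a) by (apply Rmult_le_pos; [apply Rmult_le_pos|]; lra).
      nra. }
  exists (P0 / 2). split; [lra|]. intros m.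
  destruct (Nat.le_gt_cases i0 m) as [Hm | Hm].
  - apply Rle_trans with (2 := Htail m Hm).
    pose proof (pow_lt s (S m) ltac:(lra)).
    assert ((s ^ S i0 - s ^ S m) / (1 - s) <= 1 / 2).
    { apply Rmult_le_reg_r with (1 - s); [lra|].
      unfold Rdiv. rewrite Rmult_assoc, Rinv_l by lra. lra. }
    nra.
  - pose proof (qpoch_partial_antimono s m i0 Hs ltac:(lia)) as Hanti. fold P0 in Hanti. lra.
Qed.

Lemma is_lim_seq_qpoch_partial s : 0 < s < 1 ->
  is_lim_seq (qpoch_partial s) (qpoch_inf s).
Proof.
  intros Hs. destruct (qpoch_partial_lower_bound s Hs) as [L [_ HL]].
  apply Lim_seq_correct'. apply ex_finite_lim_seq_decr with L; [|exact HL].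
  intros m. apply qpoch_partial_S_le, Hs.
Qed.

Lemma qpoch_inf_le_partial s m : 0 < s < 1 -> qpoch_inf s <= qpoch_partial s m.
Proof.
  intros Hs. apply is_lim_seq_decr_compare; [apply is_lim_seq_qpoch_partial, Hs|].
  intros k. apply qpoch_partial_S_le, Hs.
Qed.

Lemma qpoch_inf_pos s : 0 < s < 1 -> 0 < qpoch_inf s.
Proof.
  intros Hs. destruct (qpoch_partial_lower_bound s Hs) as [L [HL0 HL]].
  assert (Hle : Rbar_le L (qpoch_inf s)).
  { apply is_lim_seq_le with (fun _ => L) (qpoch_partial s); [exact HL| |].
    - apply is_lim_seq_const.
    - apply is_lim_seq_qpoch_partial, Hs. }
  simpl in Hle. lra.
Qed.

(* A finite-[n] deformation of [(s;s)_j = qpoch_partial s j]. *)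
Fixpoint qpoch_n (n : nat) (s : R) (j : nat) : R :=
  match j with
  | O => 1
  | S i => qpoch_n n s i * (1 - s ^ S i * (INR n - INR (S i)) / INR n)
  end.

Lemma qpoch_n_factor_bounds n s j : 0 < s < 1 -> (S j <= n)%nat ->
  1 - s ^ S j <= 1 - s ^ S j * (INR n - INR (S j)) / INR n <= 1.
Proof.
  intros Hs Hjn. assert (Hn : 0 < INR n) by (apply lt_0_INR; lia).
  assert (INR (S j) <= INR n) by (apply le_INR, Hjn). pose proof (pos_INR (S j)).
  pose proof (pow_S_bounds s j Hs).
  replace (s ^ S j * (INR n - INR (S j)) / INR n) with (s ^ S j * (1 - INR (S j) / INR n))
    by (field; lra).
  assert (0 <= INR (S j) / INR n <= 1).
  { split; [apply Rdiv_le_0_compat; lra|].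
    apply Rmult_le_reg_r with (INR n); [exact Hn|].
    unfold Rdiv. rewrite Rmult_assoc, Rinv_l by lra. lra. }
  nra.
Qed.

Lemma qpoch_n_bounds n s j : 0 < s < 1 -> (j <= n)%nat ->
  qpoch_partial s j <= qpoch_n n s j <= 1.
Proof.
  intros Hs. induction j as [|j IH]; intros Hjn; cbn [qpoch_n qpoch_partial]; [lra|].
  destruct (IH ltac:(lia)). pose proof (qpoch_n_factor_bounds n s j Hs Hjn).
  pose proof (qpoch_partial_pos s j Hs). pose proof (pow_S_bounds s j Hs).
  split; nra.
Qed.

Lemma qpoch_n_antimono n s m j : 0 < s < 1 -> (m <= j)%nat -> (j <= n)%nat ->
  qpoch_n n s j <= qpoch_n n s m.
Proof.
  intros Hs. induction 1 as [|j Hmj IH]; intros Hjn; [lra|].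
  cbn [qpoch_n]. pose proof (IH ltac:(lia)).
  pose proof (qpoch_n_factor_bounds n s j Hs Hjn).
  pose proof (qpoch_n_bounds n s j Hs ltac:(lia)). pose proof (qpoch_partial_pos s j Hs).
  pose proof (pow_S_bounds s j Hs). nra.
Qed.

Lemma qpoch_n_le_partial n s m : 0 < s < 1 -> (m <= n)%nat ->
  qpoch_n n s m <= qpoch_partial s m + INR m * INR m / INR n.
Proof.
  intros Hs. induction m as [|m IH]; intros Hmn; cbn [qpoch_n qpoch_partial].
  - unfold Rdiv. rewrite !Rmult_0_l. lra.
  - assert (Hn : 0 < INR n) by (apply lt_0_INR; lia).
    specialize (IH ltac:(lia)).
    destruct (qpoch_n_bounds n s m Hs ltac:(lia)).
    pose proof (pow_S_bounds s m Hs). pose proof (pos_INR m).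
    set (y := s ^ S m) in *. set (D := qpoch_n n s m) in *.
    replace (1 - y * (INR n - INR (S m)) / INR n) with ((1 - y) + y * (INR (S m) / INR n))
      by (field; lra).
    rewrite S_INR in *.
    assert (0 <= (INR m + 1) / INR n) by (apply Rdiv_le_0_compat; lra).
    assert (D * (1 - y) <= (qpoch_partial s m + INR m * INR m / INR n) * (1 - y))
      by (apply Rmult_le_compat_r; lra).
    assert (D * y * ((INR m + 1) / INR n) <= (INR m + 1) / INR n)
      by (rewrite <- (Rmult_1_l ((INR m + 1) / INR n)) at 2; apply Rmult_le_compat_r; nra).
    assert (INR m * INR m / INR n + (INR m + 1) / INR n
            <= (INR m + 1) * (INR m + 1) / INR n).
    { unfold Rdiv. rewrite <- Rmult_plus_distr_r.
      apply Rmult_le_compat_r; [left; apply Rinv_0_lt_compat, Hn | nra]. }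
    assert (0 <= INR m * INR m / INR n) by (apply Rdiv_le_0_compat; nra).
    nra.
Qed.

Lemma is_lim_seq_qpoch_n_diag s : 0 < s < 1 ->
  is_lim_seq (fun n => qpoch_n n s n) (qpoch_inf s).
Proof.
  intros Hs. apply is_lim_seq_spec. intros eps.
  pose proof (is_lim_seq_qpoch_partial s Hs) as Hlim. apply is_lim_seq_spec in Hlim.
  destruct (Hlim (pos_div_2 eps)) as [m Hm]. specialize (Hm m (le_n m)). simpl in Hm.
  assert (Hvanish : is_lim_seq (fun n => INR m * INR m * / INR n) 0).
  { replace (Finite 0) with (Rbar_mult (INR m * INR m) (Rbar_inv p_infty))
      by (simpl; f_equal; ring).
    apply is_lim_seq_scal_l, is_lim_seq_inv; [apply is_lim_seq_INR | discriminate]. }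
  apply is_lim_seq_spec in Hvanish. destruct (Hvanish (pos_div_2 eps)) as [N HN].
  exists (Nat.max 1 (Nat.max m N)). intros n Hn. simpl in HN.
  specialize (HN n ltac:(lia)). rewrite Rminus_0_r in HN.
  pose proof (qpoch_inf_le_partial s n Hs).
  pose proof (qpoch_n_bounds n s n Hs (le_n n)).
  pose proof (qpoch_n_antimono n s m n Hs ltac:(lia) (le_n n)).
  pose proof (qpoch_n_le_partial n s m Hs ltac:(lia)).
  apply Rabs_def2 in Hm. apply Rabs_def2 in HN. unfold Rdiv in *.
  rewrite Rabs_pos_eq; lra.
Qed.

Lemma triangle_S j : ((S j * (S j + 1)) / 2 = j * (j + 1) / 2 + S j)%nat.
Proof.
  replace (S j * (S j + 1))%nat with (j * (j + 1) + S j * 2)%nat by ring.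
  apply Nat.div_add. lia.
Qed.

Lemma wgt_S n alpha beta j : (j < n)%nat ->
  wgt n alpha beta (S j)
  = wgt n alpha beta j * (INR n - INR j) / INR n * (1 - alpha) * (1 - beta) ^ S j.
Proof.
  intros Hjn. assert (INR n <> 0) by (apply not_0_INR; lia).
  assert (INR n ^ j <> 0) by (apply pow_nonzero; assumption).
  unfold wgt. rewrite falling_S_r, triangle_S, pow_add. simpl pow. field. split; assumption.
Qed.

Lemma wgt_diag n alpha beta :
  wgt n alpha beta n
  = INR (fact n) / INR n ^ n * (1 - alpha) ^ n * (1 - beta) ^ (n * (n + 1) / 2).
Proof. unfold wgt. rewrite falling_diag. reflexivity. Qed.

(* [k s^k] is the general term of the derivative of the geometric series. *)
Lemma is_lim_seq_INR_mult_pow s : 0 <= s < 1 -> is_lim_seq (fun k => INR k * s ^ k) 0.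
Proof.
  intros Hs.
  assert (Hgeom : CV_radius (fun _ => 1) = 1).
  { rewrite (CV_radius_finite_DAlembert _ 1); [now rewrite Rinv_1 | intros _; lra | lra |].
    apply is_lim_seq_ext with (fun _ => 1); [|apply is_lim_seq_const].
    intros. unfold Rdiv. rewrite Rinv_1, Rmult_1_l, Rabs_R1. reflexivity. }
  assert (Hterm : is_lim_seq (fun k => INR (S k) * s ^ k) 0).
  { apply is_lim_seq_ext with (fun k => Rabs (PS_derive (fun _ => 1) k * s ^ k)).
    - intros k. unfold PS_derive. rewrite Rmult_1_r, Rabs_pos_eq; [reflexivity|].
      apply Rmult_le_pos; [apply pos_INR | apply pow_le; lra].
    - apply ex_series_lim_0, CV_disk_inside. rewrite CV_radius_derive, Hgeom.
      simpl. rewrite Rabs_pos_eq; lra. }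
  apply is_lim_seq_incr_1.
  replace (Finite 0) with (Rbar_mult s 0) by (simpl; f_equal; ring).
  apply is_lim_seq_ext with (fun k => s * (INR (S k) * s ^ k)); [intros; simpl; ring|].
  apply is_lim_seq_scal_l, Hterm.
Qed.

Lemma INR_S_mult_pow_eventually_le s eps : 0 <= s < 1 -> 0 < eps ->
  exists M, forall k, (M <= k)%nat -> INR (S k) * s ^ S k <= eps.
Proof.
  intros Hs Heps. pose proof (is_lim_seq_INR_mult_pow s Hs) as Hlim.
  apply is_lim_seq_spec in Hlim. destruct (Hlim (mkposreal eps Heps)) as [M HM].
  simpl in HM. exists M. intros k Hk. specialize (HM (S k) ltac:(lia)).
  rewrite Rminus_0_r, Rabs_pos_eq in HM
    by (apply Rmult_le_pos; [apply pos_INR | apply pow_le; lra]).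
  lra.
Qed.

Section StationaryLaw.

Variables (n : nat) (alpha beta : R) (nu : nat -> R).
Hypothesis n_pos : (1 <= n)%nat.
Hypothesis nu_stationary : stationary n alpha beta nu.

Let nu_nonneg : forall m, (m <= n)%nat -> 0 <= nu m := proj1 nu_stationary.

Lemma fmoment_0 : fmoment n nu 0 = 1.
Proof.
  pose proof nu_stationary as [_ [Htotal _]]. rewrite <- Htotal.
  apply sum_eq. intros m _. simpl. ring.
Qed.

Lemma fmoment_S_rec j :
  fmoment n nu (S j) * (INR n - (1 - beta) ^ S j * (INR n - INR (S j)))
  = (1 - beta) ^ S j * (1 - alpha) * INR (S j) * (INR n - INR j) * fmoment n nu j.
Proof.
  pose proof nu_stationary as [_ [_ Hbalance]].
  assert (Hn0 : INR n <> 0) by (apply not_0_INR; lia).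
  assert (Hswap : fmoment n nu (S j) = sum_f_R0 (fun k =>
            nu k * sum_f_R0 (fun i => trans n alpha beta k i * falling i (S j)) n) n).
  { unfold fmoment.
    rewrite (sum_eq _ (fun i =>
      sum_f_R0 (fun k => nu k * trans n alpha beta k i * falling i (S j)) n)).
    - rewrite sum_f_R0_swap. apply sum_eq. intros k _.
      rewrite scal_sum. apply sum_eq. intros i _. ring.
    - intros i Hi. rewrite <- (Hbalance i Hi) at 1. rewrite Rmult_comm, scal_sum. reflexivity. }
  rewrite (sum_eq _ (fun k =>
      nu k * falling k (S j) * ((1 - beta) ^ S j * (INR n - INR (S j)) / INR n)
      + nu k * falling k j
        * ((1 - beta) ^ S j * (1 - alpha) * INR (S j) * (INR n - INR j) / INR n)))
    in Hswap by (intros k Hk; rewrite trans_falling_moment by assumption; field; exact Hn0).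
  rewrite sum_plus, <- !scal_sum in Hswap. fold (fmoment n nu (S j)) (fmoment n nu j) in Hswap.
  transitivity (fmoment n nu (S j) * INR n
    - (1 - beta) ^ S j * (INR n - INR (S j)) * fmoment n nu (S j)); [ring|].
  rewrite Hswap at 1. field. exact Hn0.
Qed.

Lemma fmoment_mul_qpoch_n j : (j <= n)%nat ->
  fmoment n nu j * qpoch_n n (1 - beta) j = INR (fact j) * wgt n alpha beta j.
Proof.
  assert (Hn0 : INR n <> 0) by (apply not_0_INR; lia).
  induction j as [|j IH]; intros Hjn.
  - rewrite fmoment_0. unfold wgt. simpl. field.
  - assert (Hwj : wgt n alpha beta j = fmoment n nu j * qpoch_n n (1 - beta) j / INR (fact j))
      by (rewrite IH by lia; field; apply INR_fact_neq_0).
    pose proof (fmoment_S_rec j) as Hrec.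
    cbn [qpoch_n]. rewrite wgt_S, Hwj, fact_simpl, mult_INR by lia.
    transitivity (qpoch_n n (1 - beta) j
       * (fmoment n nu (S j) * (INR n - (1 - beta) ^ S j * (INR n - INR (S j)))) / INR n);
      [field; exact Hn0|].
    rewrite Hrec. field. split; [apply INR_fact_neq_0 | exact Hn0].
Qed.

Lemma nu_diag_mul_qpoch_n : nu n * qpoch_n n (1 - beta) n = wgt n alpha beta n.
Proof.
  apply (Rmult_eq_reg_l (INR (fact n))); [|apply INR_fact_neq_0].
  rewrite <- fmoment_mul_qpoch_n, fmoment_diag by lia. ring.
Qed.

Hypothesis alpha_range : 0 <= alpha < 1.
Hypothesis beta_range : 0 < beta < 1.

Lemma nu_le_wgt_div_qpoch_inf k : (k <= n)%nat ->
  nu k <= 1 / qpoch_inf (1 - beta) * wgt n alpha beta k.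
Proof.
  intros Hkn. assert (Hs : 0 < 1 - beta < 1) by lra.
  pose proof (fact_mul_le_fmoment n nu k nu_nonneg Hkn).
  pose proof (fmoment_nonneg n nu k nu_nonneg).
  pose proof (fmoment_mul_qpoch_n k Hkn).
  pose proof (qpoch_inf_le_partial (1 - beta) k Hs).
  pose proof (qpoch_n_bounds n (1 - beta) k Hs Hkn).
  pose proof (qpoch_inf_pos (1 - beta) Hs).
  pose proof (INR_fact_lt_0 k).
  apply (Rmult_le_reg_l (INR (fact k) * qpoch_inf (1 - beta))); [nra|].
  field_simplify; [|lra].
  apply Rle_trans with (qpoch_inf (1 - beta) * fmoment n nu k); nra.
Qed.

Lemma beta_mul_fmoment_S_le k : (k <= n)%nat ->
  beta * fmoment n nu (S k) <= INR (S k) * (1 - beta) ^ S k * fmoment n nu k.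
Proof.
  intros Hkn. assert (Hs : 0 < 1 - beta < 1) by lra.
  assert (Hn : 0 < INR n) by (apply lt_0_INR; lia).
  assert (INR k <= INR n) by (apply le_INR, Hkn).
  pose proof (fmoment_S_rec k) as Hrec.
  pose proof (fmoment_nonneg n nu k nu_nonneg).
  pose proof (fmoment_nonneg n nu (S k) nu_nonneg).
  pose proof (pow_S_bounds (1 - beta) k Hs). pose proof (pos_INR (S k)).
  set (y := (1 - beta) ^ S k) in *.
  assert (Hfactor : beta * INR n <= INR n - y * (INR n - INR (S k))).
  { assert (y * INR n <= (1 - beta) * INR n) by (apply Rmult_le_compat_r; lra).
    assert (0 <= y * INR (S k)) by nra.
    lra. }
  assert (Hrefresh : (1 - alpha) * (INR n - INR k) <= INR n).
  { assert (0 <= alpha * (INR n - INR k)) by (apply Rmult_le_pos; lra).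
    pose proof (pos_INR k). lra. }
  assert (0 <= INR (S k) * y * fmoment n nu k)
    by (apply Rmult_le_pos; [apply Rmult_le_pos|]; lra).
  apply (Rmult_le_reg_l (INR n)); [exact Hn|].
  apply Rle_trans with (fmoment n nu (S k) * (INR n - y * (INR n - INR (S k)))); [nra|].
  rewrite Hrec. nra.
Qed.

Lemma half_wgt_le_nu k : (k <= n)%nat -> INR (S k) * (1 - beta) ^ S k <= beta / 2 ->
  1 / 2 * wgt n alpha beta k <= nu k.
Proof.
  intros Hkn Hsmall. assert (Hs : 0 < 1 - beta < 1) by lra.
  pose proof (fmoment_bonferroni n nu k nu_nonneg Hkn).
  pose proof (beta_mul_fmoment_S_le k Hkn).
  pose proof (fmoment_mul_qpoch_n k Hkn).
  pose proof (qpoch_n_bounds n (1 - beta) k Hs Hkn).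
  pose proof (qpoch_partial_pos (1 - beta) k Hs).
  pose proof (fmoment_nonneg n nu k nu_nonneg).
  pose proof (INR_fact_lt_0 k).
  assert (fmoment n nu (S k) <= fmoment n nu k / 2).
  { apply (Rmult_le_reg_l beta); [lra|]. nra. }
  apply (Rmult_le_reg_l (INR (fact k))); [assumption|]. nra.
Qed.

Lemma nu_diag_ratio :
  nu n / (1 / qpoch_inf (1 - beta) * (INR (fact n) / INR n ^ n)
          * (1 - alpha) ^ n * (1 - beta) ^ (n * (n + 1) / 2))
  = qpoch_inf (1 - beta) / qpoch_n n (1 - beta) n.
Proof.
  assert (Hs : 0 < 1 - beta < 1) by lra.
  pose proof nu_diag_mul_qpoch_n as Hdiag. rewrite wgt_diag in Hdiag.
  destruct (qpoch_n_bounds n (1 - beta) n Hs (le_n n)).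
  pose proof (qpoch_partial_pos (1 - beta) n Hs).
  pose proof (qpoch_inf_pos (1 - beta) Hs).
  set (W := INR (fact n) / INR n ^ n * (1 - alpha) ^ n * (1 - beta) ^ (n * (n + 1) / 2))
    in *.
  assert (HW : 0 < W).
  { repeat apply Rmult_lt_0_compat; try (apply pow_lt; lra).
    - apply INR_fact_lt_0.
    - apply Rinv_0_lt_compat, pow_lt, lt_0_INR. lia. }
  replace (1 / qpoch_inf (1 - beta) * (INR (fact n) / INR n ^ n) * (1 - alpha) ^ n
           * (1 - beta) ^ (n * (n + 1) / 2)) with (W / qpoch_inf (1 - beta))
    by (unfold W, Rdiv; ring).
  replace (nu n) with (W / qpoch_n n (1 - beta) n) by (rewrite <- Hdiag; field; lra).
  field. split; lra.
Qed.

End StationaryLaw.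

Theorem mainTheorem16 (alpha beta : R) :
  0 <= alpha < 1 -> 0 < beta < 1 ->
  forall nu : nat -> nat -> R,
    (forall n : nat, (1 <= n)%nat -> stationary n alpha beta (nu n)) ->
    (exists (c C : R) (M N : nat), 0 < c < C /\
       forall n k : nat, (N <= n)%nat -> (M <= k <= n)%nat ->
         c * wgt n alpha beta k <= nu n k <= C * wgt n alpha beta k)
    /\
    is_lim_seq
      (fun n : nat => nu n n /
         (1 / qpoch_inf (1 - beta) * (INR (fact n) / INR n ^ n)
          * (1 - alpha) ^ n * (1 - beta) ^ (n * (n + 1) / 2)))
      1.
Proof.
  intros Halpha Hbeta nu Hstat.
  assert (Hs : 0 < 1 - beta < 1) by lra.
  pose proof (qpoch_inf_pos _ Hs) as Hq_pos.
  pose proof (qpoch_inf_le_partial _ 0 Hs) as Hq_le_1. simpl in Hq_le_1.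
  split.
  - destruct (INR_S_mult_pow_eventually_le (1 - beta) (beta / 2)) as [M HM]; [lra | lra |].
    exists (1 / 2), (1 / qpoch_inf (1 - beta)), M, 1%nat. split.
    + split; [lra|]. apply Rlt_le_trans with 1; [lra|].
      apply (Rmult_le_reg_r (qpoch_inf (1 - beta))); [exact Hq_pos|]. field_simplify; lra.
    + intros n k Hn [HMk Hkn]. split.
      * exact (half_wgt_le_nu n alpha beta (nu n) Hn (Hstat n Hn) Halpha Hbeta k Hkn
                 (HM k HMk)).
      * exact (nu_le_wgt_div_qpoch_inf n alpha beta (nu n) Hn (Hstat n Hn) Hbeta k Hkn).
  - apply is_lim_seq_ext_loc with (fun n => qpoch_inf (1 - beta) / qpoch_n n (1 - beta) n).
    + exists 1%nat. intros n Hn. symmetry.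
      exact (nu_diag_ratio n alpha beta (nu n) Hn (Hstat n Hn) Halpha Hbeta).
    + replace (Finite 1) with (Finite (qpoch_inf (1 - beta) / qpoch_inf (1 - beta)))
        by (f_equal; field; lra).
      apply is_lim_seq_div'; [apply is_lim_seq_const | apply is_lim_seq_qpoch_n_diag, Hs | lra].
Qed.
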